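(* Let $A$ be a power bounded linear operator of a Banach space $X$, i.e. $\sup_{k\ge0}\|A^k\|<\infty$. Let $\|x\|_1:=\sup_{k\geq0}\|A^{k}x\|$ for $x\in X$. Then for any $v\in X$ there is a metric functional $h$ of $X$ equipped with the metric $d_1(x,y)=\|x-y\|_1$ and base point $0$, such that \[ h\Big(\sum_{k=0}^{n-1}A^{k}v\Big)\leq-n\tau\quad\text{for all }n>0, \] where $\tau=\inf_{x\in X}\|Ax+v-x\|_1$.
   Context: For a metric space $(X,d_1)$ with base point $0$, let $\mathrm{Hom}(X,\mathbb{R})$ be the set of $1$-Lipschitz functions $X\to\mathbb{R}$ with the topology of pointwise convergence and $h_y(\cdot)=d_1(\cdot,y)-d_1(0,y)$. A metric functional is an element of the closure of $\{h_y:y\in X\}$ in $\mathrm{Hom}(X,\mathbb{R})$. *)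

From HB Require Import structures.
From mathcomp Require Import all_boot all_order all_algebra.
From mathcomp Require Import all_classical all_reals all_analysis.
Set Implicit Arguments. Unset Strict Implicit. Unset Printing Implicit Defensive.
Import Order.TTheory GRing.Theory Num.Theory.
Import numFieldNormedType.Exports.
Local Open Scope classical_set_scope.
Local Open Scope ring_scope.

Definition pnorm (R : realType) (X : normedModType R) (A : X -> X) (x : X) : R :=
  sup [set `|iter k A x| | k in [set: nat]].

Definition hfun (X : Type) (R : realType) (d1 : X -> X -> R) (x0 y : X) : X -> R :=
  fun x => d1 x y - d1 x0 y.

Definition lip1 (X : Type) (R : realType) (d1 : X -> X -> R) (h : X -> R) : Prop :=
  forall x y, `|h x - h y| <= d1 x y.

Definition metric_functional (X : Type) (R : realType) (d1 : X -> X -> R)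
    (x0 : X) (h : X -> R) : Prop :=
  lip1 d1 h /\
  (closure (range (hfun d1 x0) : set {ptws X -> R})) h.

From HB Require Import structures.
From mathcomp Require Import all_boot all_order all_algebra.
From mathcomp Require Import all_classical all_reals all_analysis.
From mathcomp Require Import lra.
Set Implicit Arguments. Unset Strict Implicit. Unset Printing Implicit Defensive.
Import Order.TTheory GRing.Theory Num.Theory.
Import numFieldNormedType.Exports.
Local Open Scope classical_set_scope.
Local Open Scope ring_scope.

(* For the seminorm ||.||_1 the operator A is a contraction, so with
   S_n = v + A v + ... + A^(n-1) v we get ||S_n - S_m||_1 = ||A^n S_(m-n)||_1
   <= ||S_(m-n)||_1, i.e. h_(S_m)(S_n) <= ||S_(m-n)||_1 - ||S_m||_1 for n <= m.
   Evaluating the displacement at the mean of S_0, ..., S_(m-1) shows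
   ||S_m||_1 >= m tau, and since the excess b_m = ||S_m||_1 - m tau is
   nonnegative it has, for every j, an almost record time m_j >= j with
   b_(m_j - n) <= b_(m_j) + 1/(j+1) for all n <= j.  There
   h_(S_(m_j))(S_n) <= 1/(j+1) - n tau.  Tychonoff's theorem gives a pointwise
   cluster point h of these horofunctions; it is a metric functional and
   h(S_n) <= limsup_j h_(S_(m_j))(S_n) <= - n tau. *)

Section IterAdditive.
Variables (V : zmodType) (f : {additive V -> V}).

Lemma iter_raddfD k : {morph iter k f : x y / x + y}.
Proof. by elim: k => // k IH x y; rewrite !iterS IH raddfD. Qed.

Lemma iter_raddfN k : {morph iter k f : x / - x}.
Proof. by elim: k => // k IH x; rewrite !iterS IH raddfN. Qed.

Definition orbit_sum (v : V) n := \sum_(k < n) iter k f v.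

Lemma orbit_sumS v n : orbit_sum v n.+1 = v + f (orbit_sum v n).
Proof. by rewrite /orbit_sum big_ord_recl raddf_sum. Qed.

Lemma orbit_sumD v n m :
  orbit_sum v (n + m) = orbit_sum v n + iter n f (orbit_sum v m).
Proof.
elim: n => [|n IH]; first by rewrite /orbit_sum big_ord0 add0r.
by rewrite addSn !orbit_sumS IH raddfD addrA.
Qed.

Lemma raddf_sum_orbit_sum v m :
  f (\sum_(k < m) orbit_sum v k) + v *+ m
  = \sum_(k < m) orbit_sum v k + orbit_sum v m.
Proof.
elim: m => [|m IH]; first by rewrite !big_ord0 raddf0 /orbit_sum big_ord0.
by rewrite big_ord_recr /= raddfD mulrSr addrACA IH orbit_sumS [v + _]addrC.
Qed.

End IterAdditive.

Lemma iter_linearZ (R : pzRingType) (V : lmodType R) (f : {linear V -> V}) k a x :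
  iter k f (a *: x) = a *: iter k f x.
Proof. by elim: k => // k IH; rewrite !iterS IH linearZ. Qed.

Section PowerNorm.
Variables (R : realType) (X : normedModType R) (A : {linear X -> X}) (M : R).
Hypothesis power_bounded : forall k x, `|iter k A x| <= M * `|x|.

Lemma norm_iter_le_pnorm k x : `|iter k A x| <= pnorm A x.
Proof.
apply: ub_le_sup; last by exists k.
by exists (M * `|x|) => _ [j _ <-].
Qed.

Lemma pnorm_le_ub x c : (forall k, `|iter k A x| <= c) -> pnorm A x <= c.
Proof.
by move=> ub; apply: ge_sup => [|_ [k _ <-]]; [exists `|iter 0 A x|, 0%N|].
Qed.

Lemma pnorm_ge0 x : 0 <= pnorm A x.
Proof. exact: le_trans (normr_ge0 _) (norm_iter_le_pnorm 0 x). Qed.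

Lemma ler_pnormD x y : pnorm A (x + y) <= pnorm A x + pnorm A y.
Proof.
apply: pnorm_le_ub => k; rewrite iter_raddfD.
by apply: le_trans (ler_normD _ _) (lerD _ _); apply: norm_iter_le_pnorm.
Qed.

Lemma pnormN x : pnorm A (- x) = pnorm A x.
Proof.
suff pnormN_le y : pnorm A (- y) <= pnorm A y.
  by apply: le_anti; rewrite pnormN_le /= -{1}(opprK x) pnormN_le.
by apply: pnorm_le_ub => k; rewrite iter_raddfN normrN norm_iter_le_pnorm.
Qed.

Lemma pnormZ_le a x : pnorm A (a *: x) <= `|a| * pnorm A x.
Proof.
apply: pnorm_le_ub => k; rewrite iter_linearZ normrZ.
by rewrite ler_wpM2l ?norm_iter_le_pnorm.
Qed.

Lemma pnorm_iter_le n x : pnorm A (iter n A x) <= pnorm A x.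
Proof. by apply: pnorm_le_ub => k; rewrite -iterD norm_iter_le_pnorm. Qed.

Variable v : X.

Definition min_displacement := inf [set pnorm A (A x + v - x) | x in [set: X]].

Lemma pnorm_orbit_sum_ge m : m%:R * min_displacement <= pnorm A (orbit_sum A v m).
Proof.
case: m => [|m]; first by rewrite mul0r pnorm_ge0.
set W := \sum_(k < m.+1) orbit_sum A v k.
set c := (m.+1%:R : R)^-1.
have cm : c * m.+1%:R = 1 by rewrite mulVf ?pnatr_eq0.
have mean_displacement : A (c *: W) + v - c *: W = c *: orbit_sum A v m.+1.
  have -> : orbit_sum A v m.+1 = A W + v *+ m.+1 - W.
    by rewrite raddf_sum_orbit_sum addrAC subrr add0r.
  by rewrite linearZ -scaler_nat !scalerDr scalerN scalerA cm scale1r.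
have : min_displacement <= `|c| * pnorm A (orbit_sum A v m.+1).
  apply: le_trans (pnormZ_le _ _); rewrite -mean_displacement.
  by apply: ge_inf; [exists 0 => _ [x _ <-]; apply: pnorm_ge0 | exists (c *: W)].
rewrite ger0_norm ?invr_ge0 ?ler0n // -(ler_pM2l (ltr0Sn R m)) mulrA.
by rewrite [_ * c]mulrC cm mul1r.
Qed.

Definition orbit_excess m := pnorm A (orbit_sum A v m) - m%:R * min_displacement.

Lemma orbit_excess_ge0 m : 0 <= orbit_excess m.
Proof. by rewrite subr_ge0 pnorm_orbit_sum_ge. Qed.

Lemma hfun_orbit_sum_le n m e : (n <= m)%N ->
  orbit_excess (m - n) <= orbit_excess m + e ->
  hfun (fun x y => pnorm A (x - y)) 0 (orbit_sum A v m) (orbit_sum A v n)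
  <= e - n%:R * min_displacement.
Proof.
move=> le_nm; rewrite /orbit_excess natrB // mulrBl /hfun sub0r pnormN.
have -> : orbit_sum A v n - orbit_sum A v m = - iter n A (orbit_sum A v (m - n)).
  by rewrite -{1}(subnKC le_nm) orbit_sumD opprD addrA subrr sub0r.
by rewrite pnormN; have := pnorm_iter_le n (orbit_sum A v (m - n)); lra.
Qed.

End PowerNorm.

Lemma ub_from_initial_segment (R : numDomainType) (f : nat -> R) (N : nat) (C : R) :
  (forall r, (r < N)%N -> f r <= C) ->
  (forall m, (N <= m)%N -> exists2 m', (m' < m)%N & f m <= f m') ->
  forall m, f m <= C.
Proof.
move=> init descent; elim/ltn_ind => m IH; case: (ltnP m N) => [/init //|le_Nm].
by have [m' lt_m'm le_f] := descent m le_Nm; apply: le_trans le_f (IH m' lt_m'm).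
Qed.

(* Otherwise every [m >= N] has a backward step of length at most [N] along
   which [f m = b m + m e/(N+1)] does not decrease, so [f] stays below its
   values on [0, N); but [b >= 0] forces [f m >= m e/(N+1)]. *)
Lemma nonneg_seq_almost_record (R : realType) (b : nat -> R) (e : R) (N : nat) :
  (forall m, 0 <= b m) -> 0 < e ->
  exists2 m, (N <= m)%N & forall k, (k <= N)%N -> b (m - k)%N <= b m + e.
Proof.
move=> b_ge0 e_gt0; apply: contrapT => no_record.
set q := e / N.+1%:R.
have q_gt0 : 0 < q by rewrite divr_gt0 ?ltr0Sn.
have step_le k : (k <= N)%N -> k%:R * q <= e.
  move=> le_kN; rewrite mulrCA ger_pMr // ler_pdivrMr ?ltr0Sn // mul1r.
  by rewrite ler_nat ltnW.
set f := fun m => b m + m%:R * q.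
have descent m : (N <= m)%N -> exists2 m', (m' < m)%N & f m <= f m'.
  move=> le_Nm; have [k le_kN jump] : exists2 k, (k <= N)%N & b m + e < b (m - k)%N.
    apply: contrapT => no_jump; apply: no_record; exists m => // k le_kN.
    by rewrite leNgt; apply/negP => jump; apply: no_jump; exists k.
  have k_gt0 : (0 < k)%N.
    by rewrite lt0n; apply: contraTneq jump => ->; rewrite subn0 gtrDl -leNgt ltW.
  have le_km := leq_trans le_kN le_Nm.
  exists (m - k)%N; first by rewrite ltn_subrL k_gt0 (leq_trans k_gt0 le_km).
  rewrite /f natrB // mulrBl.
  by have := step_le k le_kN; lra.
have f_ge0 m : 0 <= f m by apply: addr_ge0; [exact: b_ge0 | rewrite mulr_ge0 // ltW].
set C := \sum_(r < N) f r.
have C_ge0 : 0 <= C by rewrite sumr_ge0.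
have f_le := ub_from_initial_segment (C := C) _ descent.
have [m lt_Cm] : exists m, C / q < m%:R.
  by exists (Num.bound (C / q)); rewrite archi_boundP // divr_ge0 // ltW.
have := b_ge0 m; have : f m <= C.
  apply: f_le => r lt_rN; rewrite /C (bigD1 (Ordinal lt_rN)) //= lerDl.
  by rewrite sumr_ge0.
rewrite ltr_pdivrMr // in lt_Cm; rewrite /f; lra.
Qed.

Section MetricFunctionals.
Variables (X : choiceType) (R : realType) (d : X -> X -> R).

Lemma nbhs_ptws_eval (h : {ptws X -> R}) x (P : set R) :
  nbhs (h x) P -> nbhs h [set f : {ptws X -> R} | P (f x)].
Proof. exact: (@proj_continuous X (fun=> R) x h P). Qed.

Lemma closed_lip1 : closed [set f : {ptws X -> R} | lip1 d f].
Proof.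
move=> h clh x y; rewrite leNgt; apply/negP => gap.
set e := (`|h x - h y| - d x y) / 2.
have e_gt0 : 0 < e by rewrite divr_gt0 // subr_gt0.
have near_x := @nbhs_ptws_eval h x _ (nbhsx_ballx (h x) e e_gt0).
have near_y := @nbhs_ptws_eval h y _ (nbhsx_ballx (h y) e e_gt0).
have [f [lf []]] := clh _ (filterI near_x near_y).
rewrite /= -!ball_normE /ball_ /= => fx fy.
have := lf x y; have := ler_normD (h x - f x) (f x - h y).
have := ler_normD (f x - f y) (f y - h y).
rewrite !addrA !subrK (distrC (h y)) /e in fx fy *; lra.
Qed.

Variable x0 : X.
Hypothesis d_triangle : forall x y z, d x z <= d x y + d y z.
Hypothesis d_sym : forall x y, d x y = d y x.

Lemma lip1_hfun y : lip1 d (hfun d x0 y).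
Proof.
move=> x x'; rewrite /hfun opprB addrA subrK ler_norml.
by have := d_triangle x x' y; have := d_triangle x' x y; rewrite (d_sym x' x); lra.
Qed.

Lemma metric_functional_le_limsup (y : nat -> X) :
  exists h, metric_functional d x0 h /\
    forall x u,
      (forall e, 0 < e -> \forall j \near \oo, hfun d x0 (y j) x <= u + e) ->
      h x <= u.
Proof.
pose g j : {ptws X -> R} := hfun d x0 (y j).
have g_bounded : (g @ \oo) [set f | forall x, `[- d x x0, d x x0]%classic (f x)].
  exists 0%N => // j _ x /=; rewrite in_itv /= -ler_norml.
  by have := lip1_hfun (y j) x x0; rewrite /hfun subrr subr0.
have [h [_ g_cluster]] := tychonoff (fun x => @segment_compact R _ _)
  (fmap_proper_filter g _) g_bounded.
have g_range : (g @ \oo) (range (hfun d x0)) by exists 0%N => // j _; exists (y j).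
have h_closure : closure (range (hfun d x0) : set {ptws X -> R}) h.
  by move=> B; apply: g_cluster g_range.
exists h; split; first split => //.
  apply: closed_lip1; apply: closureS h_closure => _ [z _ <-].
  exact: lip1_hfun.
move=> x u g_le; apply/ler_addgt0Pr => e e_gt0.
have e2_gt0 : 0 < e / 2 by rewrite divr_gt0.
have [N _ g_tail_le] := g_le _ e2_gt0.
have g_tail : (g @ \oo) [set f | exists2 j, (N <= j)%N & f = g j].
  by exists N => // j Nj; exists j.
have near_hx := nbhs_ptws_eval (nbhsx_ballx (h x) _ e2_gt0).
have [_ [[j Nj ->]]] := g_cluster _ _ g_tail near_hx.
rewrite /= -ball_normE /= ltr_norml => /andP[_ close].
by have := g_tail_le j Nj; rewrite /= /g in close *; lra.
Qed.

End MetricFunctionals.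

Theorem corollary18 (R : realType) (X : completeNormedModType R)
    (A : {linear X -> X})
    (Hpb : exists M : R, forall (k : nat) (x : X), `|iter k A x| <= M * `|x|)
    (v : X) :
  let d1 := fun x y : X => pnorm A (x - y) in
  let tau := inf [set pnorm A (A x + v - x) | x in [set: X]] in
  exists h : X -> R, metric_functional d1 0 h /\
    forall n : nat, (0 < n)%N ->
      h (\sum_(k < n) iter k A v) <= - (n%:R * tau).
Proof.
move=> d1 tau; have [M power_bounded] := Hpb.
have d1_triangle x y z : d1 x z <= d1 x y + d1 y z.
  by apply: le_trans (ler_pnormD power_bounded _ _); rewrite addrA subrK.
have d1_sym x y : d1 x y = d1 y x by rewrite /d1 -opprB (pnormN power_bounded).
have /choice[ms ms_record] j : exists m, (j <= m)%N /\ forall k, (k <= j)%N ->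
    orbit_excess A v (m - k) <= orbit_excess A v m + j.+1%:R^-1.
  have inv_gt0 : 0 < j.+1%:R^-1 :> R by rewrite invr_gt0.
  have [m le_jm record] := nonneg_seq_almost_record j
    (orbit_excess_ge0 power_bounded v) inv_gt0.
  by exists m.
have [h [h_mf h_le]] := metric_functional_le_limsup 0 d1_triangle d1_sym
  (fun j => orbit_sum A v (ms j)).
exists h; split => // n _.
rewrite /tau -/(min_displacement A v) -/(orbit_sum A v n).
apply: h_le => e e_gt0; near=> j.
have [le_jm record] := ms_record j.
have le_nj : (n <= j)%N by near: j; exact: nbhs_infty_ge.
have small_inv : j.+1%:R^-1 < e.
  by near: j; exact: near_infty_natSinv_lt (PosNum e_gt0).
have bound :=
  hfun_orbit_sum_le power_bounded (leq_trans le_nj le_jm) (record n le_nj).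
apply: le_trans bound _; rewrite addrC lerD2l ltW.
Unshelve. all: by end_near.
Qed.
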